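(* For every fixed $c\in[1,\infty)$, \[ \Pr\bigl[L_n\ge c\ln n\bigr]=n^{-K(c)+o(1)}\qquad(n\to\infty), \] where $K(c)=\dfrac{(1-c)^2}{8c}$.
   Context: Let $\xi_1,\xi_2,\dots$ be i.i.d. random variables with $\Pr[\xi_i=1]=\Pr[\xi_i=-1]=1/2$, and let $S_t=\sum_{i=1}^t\xi_i$ (simple symmetric random walk, $S_0=0$). Define $L_n=\sum_{i=1}^n S_i^2/i^2$. *)

From Stdlib Require Import Reals Lra List.
Import ListNotations.
Open Scope R_scope.

(* All 2^n sign sequences (xi_1,...,xi_n) in {+1,-1}^n; the uniform measure
   on this list is the law of (xi_1,...,xi_n). *)
Fixpoint sign_seqs (n : nat) : list (list R) :=
  match n with
  | O => [[]]
  | S m => map (cons 1) (sign_seqs m) ++ map (cons (-1)) (sign_seqs m)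
  end.

Definition walk (xs : list R) (t : nat) : R := fold_right Rplus 0 (firstn t xs).

Definition Lsum (xs : list R) : R :=
  fold_right (fun i acc => (walk xs i)^2 / (INR i)^2 + acc) 0 (seq 1 (length xs)).

Definition prob_L (c : R) (n : nat) : R :=
  INR (length (filter (fun xs => if Rle_dec (c * ln (INR n)) (Lsum xs) then true else false)
                      (sign_seqs n))) / 2 ^ n.

Definition Kc (c : R) : R := (1 - c)^2 / (8 * c).

(* For [lam = (1 - r^2)/8] with [0 < r <= 1], the exponential moment
   [E exp (lam L_n)] is [n^((1-r)/4 + o(1))].  Both bounds come from backward
   induction in time on the conditional moment given that the walk is at [x] at
   time [t]: it is at most [exp (a_t x^2 + b_t)] with [a_t <= (1-r)/(4t)], by
   [cosh y <= exp (y^2/2)], and at least a similar expression, obtained by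
   tilting each step towards the sign of [x] with bias [(1-r) x / (2t)].
   Chernoff's bound at [r = 1/c] gives [Pr[L_n >= c ln n] <= n^(-K(c)+o(1))].
   Conversely, for the tilt at [r = 1/(c+rho)] the moments at [1/c] and
   [1/(c+2rho)] are too small to account for the part of the moment coming from
   [L_n < c ln n] or [L_n > (c+2rho) ln n], so [c ln n <= L_n] carries
   probability at least [n^(-K(c)-O(rho))]. *)

From Stdlib Require Import Reals Lra Lia ZArith List.
From Coquelicot Require Import Coquelicot.
Import ListNotations.
Open Scope R_scope.

Lemma exp_le_exp a b : a <= b -> exp a <= exp b.
Proof. intros [H| ->]; [left; apply exp_increasing|]; lra. Qed.

Lemma cosh_pos y : 0 < cosh y.
Proof. unfold cosh. pose proof (exp_pos y). pose proof (exp_pos (- y)). lra. Qed.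

Lemma ln_1_plus_le x : -1 < x -> ln (1 + x) <= x.
Proof.
  intro H. rewrite <- (ln_exp x) at 2. apply ln_le; [lra|]. apply exp_ineq1_le.
Qed.

Lemma ln_1_plus_le_cubic x : -1 < x -> ln (1 + x) <= x - x ^ 2 / 2 + x ^ 3 / 3.
Proof.
  intro Hx.
  set (f := fun y => y - y ^ 2 / 2 + y ^ 3 / 3 - ln (1 + y)).
  set (f' := fun y => y ^ 3 / (1 + y)).
  assert (Hd : forall y, -1 < y -> derivable_pt_lim f y (f' y)).
  { intros y Hy. apply is_derive_Reals. unfold f, f'. auto_derive; [lra | field; lra]. }
  assert (Hf0 : f 0 = 0) by (unfold f; rewrite Rplus_0_r, ln_1; field).
  enough (0 <= f x) by (unfold f in *; lra).
  destruct (Rtotal_order x 0) as [Hlt|[-> |Hgt]]; [| lra |].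
  - destruct (MVT_cor2 f f' x 0 Hlt) as [y [Hy1 Hy2]]; [intros; apply Hd; lra|].
    assert (f' y < 0).
    { unfold f'. apply Rdiv_neg_pos; [|lra].
      replace (y ^ 3) with (y * (y * y)) by ring. apply Rmult_neg_pos; nra. }
    nra.
  - destruct (MVT_cor2 f f' 0 x Hgt) as [y [Hy1 Hy2]]; [intros; apply Hd; lra|].
    assert (0 < f' y) by (unfold f'; apply Rdiv_lt_0_compat; [apply pow_lt|]; lra).
    nra.
Qed.

Lemma sinh_le_mul_cosh y : 0 <= y -> sinh y <= y * cosh y.
Proof.
  intro Hy.
  set (f := fun u => u * cosh u - sinh u).
  assert (Hd : forall u, derivable_pt_lim f u (u * sinh u)).
  { intro u. apply is_derive_Reals. unfold f, cosh, sinh. auto_derive; [easy | field]. }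
  enough (0 <= f y) by (unfold f in *; lra).
  destruct (Req_dec y 0) as [-> |Hne]; [unfold f; rewrite sinh_0; unfold cosh; lra|].
  destruct (MVT_cor2 f (fun u => u * sinh u) 0 y) as [u [Hu1 Hu2]]; [lra | intros; apply Hd |].
  assert (0 < sinh u) by (rewrite <- sinh_0; apply sinh_lt; lra).
  assert (f 0 = 0) by (unfold f; rewrite sinh_0; ring).
  assert (0 <= u * sinh u * (y - 0)) by (apply Rmult_le_pos; [apply Rmult_le_pos|]; lra).
  lra.
Qed.

Lemma cosh_le_exp_half_sq y : cosh y <= exp (y ^ 2 / 2).
Proof.
  (* [u^2/2 - ln (cosh u)] vanishes at 0 and has derivative [u - tanh u >= 0] for [u >= 0]. *)
  enough (H : forall y, 0 <= y -> cosh y <= exp (y ^ 2 / 2)).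
  { destruct (Rle_dec 0 y); [auto|].
    replace (cosh y) with (cosh (- y)) by (unfold cosh; rewrite Ropp_involutive; lra).
    replace (y ^ 2) with ((- y) ^ 2) by ring. apply H. lra. }
  clear y. intros y Hy.
  set (phi := fun u => u ^ 2 / 2 - ln (cosh u)).
  set (phi' := fun u => u - sinh u / cosh u).
  assert (Hd : forall u, derivable_pt_lim phi u (phi' u)).
  { intro u. apply is_derive_Reals. unfold phi, phi', cosh, sinh. auto_derive.
    - pose proof (exp_pos u). pose proof (exp_pos (- u)). lra.
    - pose proof (exp_pos u). pose proof (exp_pos (- u)). field. lra. }
  assert (Hphi0 : phi 0 = 0).
  { unfold phi, cosh. rewrite Ropp_0, exp_0. replace ((1 + 1) / 2) with 1 by field.
    rewrite ln_1. field. }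
  assert (Hphiy : 0 <= phi y).
  { destruct (Req_dec y 0) as [-> |Hne]; [lra|].
    destruct (MVT_cor2 phi phi' 0 y) as [u [Hu1 Hu2]]; [lra | intros; apply Hd |].
    assert (0 <= phi' u).
    { unfold phi'. pose proof (sinh_le_mul_cosh u ltac:(lra)). pose proof (cosh_pos u).
      enough (sinh u / cosh u <= u) by lra.
      apply Rle_div_l; lra. }
    nra. }
  rewrite <- (exp_ln (cosh y)) by apply cosh_pos.
  apply exp_le_exp. unfold phi in Hphiy. lra.
Qed.

Lemma ln_succ_sub_ge_inv t : 0 < t -> / (t + 1) <= ln (t + 1) - ln t.
Proof.
  intro Ht. enough (ln (t / (t + 1)) <= - / (t + 1)) by (rewrite ln_div in H; lra).
  replace (t / (t + 1)) with (1 + - / (t + 1)) by (field; lra).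
  apply ln_1_plus_le.
  enough (/ (t + 1) < 1) by lra. rewrite <- Rinv_1. apply Rinv_lt_contravar; lra.
Qed.

Lemma ln_succ_sub_le_inv t : 0 < t -> ln (t + 1) - ln t <= / t.
Proof.
  intro Ht. rewrite <- ln_div by lra.
  replace ((t + 1) / t) with (1 + / t) by (field; lra).
  apply ln_1_plus_le. enough (0 < / t) by lra. apply Rinv_0_lt_compat; lra.
Qed.

Lemma exp_mul_ln_le_split x y eps : 1 <= y -> 0 <= x < 1 -> 0 < eps < 1 ->
  exp (x * ln y) <= eps * y + exp (x * (ln (/ eps) / (1 - x))).
Proof.
  intros Hy Hx He.
  set (L := ln (/ eps) / (1 - x)).
  pose proof (exp_pos (x * L)).
  destruct (Rle_dec (ln y) L) as [HL|HL].
  - assert (exp (x * ln y) <= exp (x * L)) by (apply exp_le_exp, Rmult_le_compat_l; lra).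
    nra.
  - assert (Hln : ln (/ eps) < (1 - x) * ln y).
    { apply Rnot_le_lt in HL. apply Rmult_lt_compat_l with (r := 1 - x) in HL; [|lra].
      unfold L in HL. replace ((1 - x) * (ln (/ eps) / (1 - x))) with (ln (/ eps)) in HL
        by (field; lra). lra. }
    rewrite ln_Rinv in Hln by lra.
    assert (x * ln y < ln (eps * y)) by (rewrite ln_mult by lra; lra).
    assert (exp (x * ln y) < eps * y).
    { rewrite <- (exp_ln (eps * y)) by nra. apply exp_increasing. auto. }
    lra.
Qed.

Lemma exp_convex q a b : 0 < q < 1 ->
  exp (q * a + (1 - q) * b) <= q * exp a + (1 - q) * exp b.
Proof.
  intro Hq. set (m := q * a + (1 - q) * b).
  pose proof (exp_ineq1_le (a - m)). pose proof (exp_ineq1_le (b - m)).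
  replace (exp a) with (exp m * exp (a - m)) by (rewrite <- exp_plus; f_equal; ring).
  replace (exp b) with (exp m * exp (b - m)) by (rewrite <- exp_plus; f_equal; ring).
  pose proof (exp_pos m).
  assert (q * (a - m) + (1 - q) * (b - m) = 0) by (unfold m; ring).
  assert (q * (exp m * (1 + (a - m))) <= q * (exp m * exp (a - m))).
  { apply Rmult_le_compat_l; [lra|]. apply Rmult_le_compat_l; lra. }
  assert ((1 - q) * (exp m * (1 + (b - m))) <= (1 - q) * (exp m * exp (b - m))).
  { apply Rmult_le_compat_l; [lra|]. apply Rmult_le_compat_l; lra. }
  nra.
Qed.

(* Tilting a fair coin to bias [m] costs at most its relative entropy
   [((1+m) ln(1+m) + (1-m) ln(1-m))/2 <= m^2/2 + m^4/3]. *)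
Lemma exp_tilted_le_mean_exp u v m : -1 < m < 1 ->
  exp ((1 + m) / 2 * u + (1 - m) / 2 * v - (m ^ 2 / 2 + m ^ 4 / 3)) <= (exp u + exp v) / 2.
Proof.
  intro Hm.
  set (q := (1 + m) / 2).
  pose proof (exp_convex q (u - ln (1 + m)) (v - ln (1 - m)) ltac:(unfold q; lra)) as W.
  assert (E1 : q * exp (u - ln (1 + m)) = exp u / 2).
  { unfold Rminus. rewrite exp_plus, exp_Ropp, exp_ln by lra. unfold q. field. lra. }
  assert (E2 : (1 - q) * exp (v - ln (1 - m)) = exp v / 2).
  { unfold Rminus. rewrite exp_plus, exp_Ropp, exp_ln by lra. unfold q. field. lra. }
  rewrite E1, E2 in W.
  eapply Rle_trans; [| replace ((exp u + exp v) / 2) with (exp u / 2 + exp v / 2) by field; exact W].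
  apply exp_le_exp.
  pose proof (ln_1_plus_le_cubic m ltac:(lra)) as L1.
  pose proof (ln_1_plus_le_cubic (- m) ltac:(lra)) as L2.
  replace (1 + - m) with (1 - m) in L2 by ring.
  assert ((1 + m) * ln (1 + m) <= (1 + m) * (m - m ^ 2 / 2 + m ^ 3 / 3))
    by (apply Rmult_le_compat_l; lra).
  assert ((1 - m) * ln (1 - m) <= (1 - m) * (- m - (- m) ^ 2 / 2 + (- m) ^ 3 / 3))
    by (apply Rmult_le_compat_l; lra).
  unfold q. nra.
Qed.

Lemma exists_nat_gt A : exists n : nat, A < INR n.
Proof.
  destruct (archimed A) as [H1 _].
  destruct (Z_le_gt_dec 0 (up A)) as [Hz|Hz].
  - exists (Z.to_nat (up A)). rewrite INR_IZR_INZ, Z2Nat.id by lia. lra.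
  - exists 0%nat. simpl. apply Z.gt_lt, IZR_lt in Hz. lra.
Qed.

Lemma ln_INR_eventually_ge X : exists N, forall n, (N <= n)%nat -> X <= ln (INR n).
Proof.
  destruct (exists_nat_gt (exp X)) as [N HN]. exists N. intros n Hn.
  assert (INR N <= INR n) by (apply le_INR; lia).
  rewrite <- (ln_exp X). apply ln_le; [apply exp_pos | lra].
Qed.

Definition sum_list (l : list (list R)) (f : list R -> R) : R :=
  fold_right (fun xs acc => f xs + acc) 0 l.

Lemma sum_list_app l1 l2 f : sum_list (l1 ++ l2) f = sum_list l1 f + sum_list l2 f.
Proof. induction l1; simpl; [ring | rewrite IHl1; ring]. Qed.

Lemma sum_list_map l g f : sum_list (map g l) f = sum_list l (fun xs => f (g xs)).
Proof. induction l; simpl; [ring | rewrite IHl; ring]. Qed.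

Lemma sum_list_le l f g : (forall xs, f xs <= g xs) -> sum_list l f <= sum_list l g.
Proof. intro H. induction l; simpl; [lra | specialize (H a); lra]. Qed.

Lemma sum_list_ext l f g : (forall xs, f xs = g xs) -> sum_list l f = sum_list l g.
Proof. intro H. induction l; simpl; [ring | rewrite IHl, H; ring]. Qed.

Lemma sum_list_plus l f g : sum_list l (fun xs => f xs + g xs) = sum_list l f + sum_list l g.
Proof. induction l; simpl; [ring | rewrite IHl; ring]. Qed.

Lemma sum_list_scal l k f : sum_list l (fun xs => k * f xs) = k * sum_list l f.
Proof. induction l; simpl; [ring | rewrite IHl; ring]. Qed.

Lemma length_filter_sum_list (p : list R -> bool) l :
  INR (length (filter p l)) = sum_list l (fun xs => if p xs then 1 else 0).
Proof.
  induction l as [|a l IH]; [reflexivity|]. cbn [filter sum_list fold_right] in *.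
  unfold sum_list in IH. destruct (p a); cbn [length]; [rewrite S_INR|]; rewrite IH; ring.
Qed.

(** * Expectations over [n] fair signs *)

Definition expect (n : nat) (f : list R -> R) : R := sum_list (sign_seqs n) f / 2 ^ n.

Lemma expect_S n f :
  expect (S n) f = (expect n (fun xs => f (1 :: xs)) + expect n (fun xs => f (-1 :: xs))) / 2.
Proof.
  unfold expect. simpl sign_seqs. rewrite sum_list_app, !sum_list_map. simpl pow.
  field. apply pow_nonzero. lra.
Qed.

Lemma expect_le n f g : (forall xs, f xs <= g xs) -> expect n f <= expect n g.
Proof.
  intro H. unfold expect. apply Rmult_le_compat_r; [|apply sum_list_le; auto].
  left. apply Rinv_0_lt_compat, pow_lt. lra.
Qed.

Lemma expect_ext n f g : (forall xs, f xs = g xs) -> expect n f = expect n g.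
Proof. intro H. unfold expect. rewrite (sum_list_ext _ _ _ H). reflexivity. Qed.

Lemma expect_plus n f g : expect n (fun xs => f xs + g xs) = expect n f + expect n g.
Proof. unfold expect. rewrite sum_list_plus. field. apply pow_nonzero. lra. Qed.

Lemma expect_scal n k f : expect n (fun xs => k * f xs) = k * expect n f.
Proof. unfold expect. rewrite sum_list_scal. field. apply pow_nonzero. lra. Qed.

Definition indic (a x : R) : R := if Rle_dec a x then 1 else 0.

Lemma indic_le_exp a x lam : 0 <= lam -> indic a x <= exp (lam * (x - a)).
Proof.
  intro H. unfold indic. destruct Rle_dec.
  - rewrite <- exp_0. apply exp_le_exp. nra.
  - left. apply exp_pos.
Qed.

Lemma prob_L_expect c n : prob_L c n = expect n (fun xs => indic (c * ln (INR n)) (Lsum xs)).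
Proof.
  unfold prob_L, expect, indic. rewrite length_filter_sum_list. f_equal.
  apply sum_list_ext. intro xs. destruct Rle_dec; reflexivity.
Qed.

(* [Lsum_from s t xs = sum_k (s + S_k)^2 / (t + k)^2]: the contribution to
   [L] of the steps [xs], for a walk that is at [s] at time [t]. *)
Fixpoint Lsum_from (s : R) (t : nat) (xs : list R) : R :=
  match xs with
  | [] => 0
  | x :: xs' => (s + x) ^ 2 / INR (S t) ^ 2 + Lsum_from (s + x) (S t) xs'
  end.

Lemma fold_right_map_nat (f : nat -> R -> R) (g : nat -> nat) l a :
  fold_right f a (map g l) = fold_right (fun i acc => f (g i) acc) a l.
Proof. induction l; simpl; congruence. Qed.

Lemma fold_right_ext (f g : nat -> R -> R) l a :
  (forall i acc, f i acc = g i acc) -> fold_right f a l = fold_right g a l.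
Proof. intro H. induction l; simpl; [reflexivity | rewrite IHl; apply H]. Qed.

Lemma Lsum_from_fold xs : forall s t,
  fold_right (fun i acc => (s + walk xs i) ^ 2 / INR (t + i) ^ 2 + acc) 0 (seq 1 (length xs))
  = Lsum_from s t xs.
Proof.
  induction xs as [|x xs IH]; intros s t; [reflexivity|].
  cbn [length seq fold_right Lsum_from].
  rewrite <- seq_shift, fold_right_map_nat, <- (IH (s + x) (S t)).
  f_equal.
  - unfold walk. simpl. rewrite Rplus_0_r, Nat.add_1_r. reflexivity.
  - apply fold_right_ext. intros i acc. unfold walk. cbn [firstn fold_right].
    rewrite Nat.add_succ_r, Rplus_assoc. reflexivity.
Qed.

Lemma Lsum_eq_Lsum_from xs : Lsum xs = Lsum_from 0 0 xs.
Proof.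
  rewrite <- Lsum_from_fold. apply fold_right_ext. intros i acc. rewrite Rplus_0_l. reflexivity.
Qed.

Definition mgf_from (mu s : R) (t n : nat) : R := expect n (fun xs => exp (mu * Lsum_from s t xs)).

Lemma mgf_from_0 mu s t : mgf_from mu s t 0 = 1.
Proof. unfold mgf_from, expect. simpl. rewrite Rmult_0_r, exp_0. field. Qed.

Lemma mgf_from_S mu s t n :
  mgf_from mu s t (S n) =
  (exp (mu * ((s + 1) ^ 2 / INR (S t) ^ 2)) * mgf_from mu (s + 1) (S t) n +
   exp (mu * ((s + -1) ^ 2 / INR (S t) ^ 2)) * mgf_from mu (s + -1) (S t) n) / 2.
Proof.
  unfold mgf_from. rewrite expect_S. cbn [Lsum_from].
  rewrite <- !expect_scal. f_equal. f_equal; apply expect_ext; intro xs;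
  rewrite <- exp_plus; f_equal; ring.
Qed.

Lemma mgf_from_Lsum mu n : mgf_from mu 0 0 n = expect n (fun xs => exp (mu * Lsum xs)).
Proof. apply expect_ext. intro. rewrite Lsum_eq_Lsum_from. reflexivity. Qed.

(** * Upper bound on the moment generating function *)

(* [mgf_from mu s t n <= exp (ub_quad mu t n * s^2 + ub_const mu t n)]: one step
   of the recursion is [cosh x <= exp (x^2/2)]. *)
Fixpoint ub_quad (mu : R) (t n : nat) : R :=
  match n with
  | O => 0
  | S n' => let a := ub_quad mu (S t) n' + mu / INR (S t) ^ 2 in a + 2 * a ^ 2
  end.

Fixpoint ub_const (mu : R) (t n : nat) : R :=
  match n with
  | O => 0
  | S n' => ub_const mu (S t) n' + (ub_quad mu (S t) n' + mu / INR (S t) ^ 2)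
  end.

Lemma mgf_from_le mu : forall n s t,
  mgf_from mu s t n <= exp (ub_quad mu t n * s ^ 2 + ub_const mu t n).
Proof.
  induction n as [|n IH]; intros s t.
  - rewrite mgf_from_0. simpl. rewrite Rmult_0_l, Rplus_0_l, exp_0. lra.
  - rewrite mgf_from_S. cbn [ub_quad ub_const]. cbv zeta.
    set (a := ub_quad mu (S t) n + mu / INR (S t) ^ 2).
    set (b := ub_const mu (S t) n).
    assert (HT : INR (S t) <> 0) by (apply not_0_INR; lia).
    assert (Hp : exp (mu * ((s + 1) ^ 2 / INR (S t) ^ 2)) * mgf_from mu (s + 1) (S t) n
                 <= exp (a * (s ^ 2 + 1) + b) * exp (2 * a * s)).
    { rewrite <- exp_plus. eapply Rle_trans; [apply Rmult_le_compat_l; [left; apply exp_pos | apply IH]|].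
      rewrite <- exp_plus. apply exp_le_exp. unfold a, b. right. field. auto. }
    assert (Hm : exp (mu * ((s + -1) ^ 2 / INR (S t) ^ 2)) * mgf_from mu (s + -1) (S t) n
                 <= exp (a * (s ^ 2 + 1) + b) * exp (- (2 * a * s))).
    { rewrite <- exp_plus. eapply Rle_trans; [apply Rmult_le_compat_l; [left; apply exp_pos | apply IH]|].
      rewrite <- exp_plus. apply exp_le_exp. unfold a, b. right. field. auto. }
    pose proof (cosh_le_exp_half_sq (2 * a * s)) as Hc. unfold cosh in Hc.
    pose proof (exp_pos (a * (s ^ 2 + 1) + b)).
    apply Rle_trans with (exp (a * (s ^ 2 + 1) + b) * exp ((2 * a * s) ^ 2 / 2)); [nra|].
    rewrite <- exp_plus. apply exp_le_exp, Req_le. field.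
Qed.

(* With [m = k - 2 k^2], [k / t] is a supersolution of the recursion
   [a_t = (a_(t+1) + m / (t+1)^2) + 2 (a_(t+1) + m / (t+1)^2)^2]. *)
Lemma riccati_supersolution k T : 0 <= k <= 1 / 4 -> 2 <= T ->
  let m := k - 2 * k ^ 2 in
  (k * T + m) / T ^ 2 + 2 * ((k * T + m) / T ^ 2) ^ 2 <= k / (T - 1).
Proof.
  intros Hk HT m.
  assert (Hm : 0 <= m <= k) by (unfold m; nra).
  assert (E : k / (T - 1) - ((k * T + m) / T ^ 2 + 2 * ((k * T + m) / T ^ 2) ^ 2)
    = (T ^ 2 * (m + 2 * k ^ 2 - 4 * k * m) + T * (4 * k * m - 2 * m ^ 2) + 2 * m ^ 2)
      / (T ^ 4 * (T - 1))).
  { unfold m. field. lra. }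
  enough (0 <= k / (T - 1) - ((k * T + m) / T ^ 2 + 2 * ((k * T + m) / T ^ 2) ^ 2)) by lra.
  rewrite E. apply Rdiv_le_0_compat; [| apply Rmult_lt_0_compat; [apply pow_lt|]; lra].
  assert (0 <= T ^ 2 * (m + 2 * k ^ 2 - 4 * k * m)) by (apply Rmult_le_pos; nra).
  assert (0 <= T * (4 * k * m - 2 * m ^ 2)) by (apply Rmult_le_pos; nra).
  nra.
Qed.

Section MgfUpper.
Variable r : R.
Hypothesis Hr : 0 < r <= 1.
Let mu := (1 - r ^ 2) / 8.
Let ka := (1 - r) / 4.

Lemma mu_eq : mu = ka - 2 * ka ^ 2.
Proof. unfold mu, ka. field. Qed.

Lemma ub_quad_bound : forall n t, (1 <= t)%nat -> 0 <= ub_quad mu t n <= ka / INR t.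
Proof.
  assert (Hka : 0 <= ka <= 1 / 4) by (unfold ka; lra).
  assert (Hmu : 0 <= mu) by (rewrite mu_eq; nra).
  induction n as [|n IH]; intros t Ht.
  - simpl. split; [lra|]. apply Rdiv_le_0_compat; [lra | apply lt_0_INR; lia].
  - cbn [ub_quad]. cbv zeta. destruct (IH (S t) ltac:(lia)) as [Hl Hu].
    set (T := INR (S t)) in *.
    assert (HT : T = INR t + 1) by apply S_INR.
    assert (Ht1 : 1 <= INR t) by (apply (le_INR 1); lia).
    assert (HT2 : 0 < T ^ 2) by (apply pow_lt; lra).
    set (a := ub_quad mu (S t) n + mu / T ^ 2).
    assert (Ha0 : 0 <= a) by (unfold a; pose proof (Rdiv_le_0_compat mu _ Hmu HT2); lra).
    assert (Ha : a <= (ka * T + mu) / T ^ 2).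
    { unfold a. replace ((ka * T + mu) / T ^ 2) with (ka / T + mu / T ^ 2) by (field; lra). lra. }
    pose proof (riccati_supersolution ka T Hka ltac:(lra)) as R. cbv zeta in R.
    rewrite <- mu_eq in R. replace (T - 1) with (INR t) in R by lra.
    split; nra.
Qed.

Lemma ub_const_bound : forall n t, (1 <= t)%nat ->
  ub_const mu t n <= ka * (ln (INR (t + n)) - ln (INR t)) + mu * (/ INR t - / INR (t + n)).
Proof.
  assert (Hka : 0 <= ka) by (unfold ka; lra).
  assert (Hmu : 0 <= mu) by (unfold mu; nra).
  induction n as [|n IH]; intros t Ht.
  - simpl. rewrite Nat.add_0_r. lra.
  - cbn [ub_const]. specialize (IH (S t) ltac:(lia)).
    replace (S t + n)%nat with (t + S n)%nat in IH by lia.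
    destruct (ub_quad_bound n (S t) ltac:(lia)) as [_ Hu].
    assert (HT : INR (S t) = INR t + 1) by apply S_INR.
    assert (Ht1 : 1 <= INR t) by (apply (le_INR 1); lia).
    assert (ka / INR (S t) <= ka * (ln (INR (S t)) - ln (INR t))).
    { apply Rmult_le_compat_l; [lra|]. rewrite HT. apply ln_succ_sub_ge_inv. lra. }
    assert (mu / INR (S t) ^ 2 <= mu * (/ INR t - / INR (S t))).
    { replace (/ INR t - / INR (S t)) with (/ (INR t * INR (S t))) by (rewrite HT; field; lra).
      apply Rmult_le_compat_l; [lra|]. apply Rinv_le_contravar; rewrite HT; nra. }
    lra.
Qed.

Lemma mgf_Lsum_le n : (1 <= n)%nat ->
  expect n (fun xs => exp (mu * Lsum xs)) <= exp (ka * ln (INR n) + ka + 2 * mu).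
Proof.
  intro Hn. rewrite <- mgf_from_Lsum. eapply Rle_trans; [apply mgf_from_le|].
  apply exp_le_exp. destruct n as [|n]; [lia|].
  cbn [ub_const]. pose proof (ub_const_bound n 1 (le_n 1)) as Hb.
  destruct (ub_quad_bound n 1 (le_n 1)) as [_ Hu].
  replace (1 + n)%nat with (S n) in Hb by lia.
  rewrite INR_1, ln_1 in *.
  assert (Hmu : 0 <= mu) by (unfold mu; nra).
  assert (0 < / INR (S n)) by (apply Rinv_0_lt_compat, lt_0_INR; lia).
  replace (mu / 1 ^ 2) with mu by field.
  replace (ka / 1) with ka in Hu by field.
  rewrite Rinv_1 in Hb. replace (0 ^ 2) with 0 by ring. nra.
Qed.

End MgfUpper.

(** * Lower bound on the moment generating function *)

Section MgfLower.
Variable r : R.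
Hypothesis Hr : 0 < r < 1.
Let mu := (1 - r ^ 2) / 8.
Let ga := (1 - r) / 2.

Lemma ga_bounds : 0 < ga < 1 / 2.
Proof. unfold ga; lra. Qed.

Lemma mu_nonneg : 0 <= mu.
Proof. unfold mu; nra. Qed.

(* [mgf_from mu x t n >= exp (lb_quad t n * x^2 - lb_quart t n * x^4 + lb_const t n)]
   for [|x| <= t]; one step of the recursion tilts the next sign towards the
   sign of [x], with bias [ga x / (t+1)]. *)
Fixpoint lb_quart (t n : nat) : R :=
  match n with
  | O => 0
  | S n' => lb_quart (S t) n' * (1 + 4 * ga / INR (S t)) + ga ^ 4 / (3 * INR (S t) ^ 4)
  end.

Fixpoint lb_quad (t n : nat) : R :=
  match n with
  | O => 0
  | S n' => (mu / INR (S t) ^ 2 + lb_quad (S t) n') * (1 + 2 * ga / INR (S t))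
            - lb_quart (S t) n' * (6 + 4 * ga / INR (S t)) - ga ^ 2 / (2 * INR (S t) ^ 2)
  end.

Fixpoint lb_const (t n : nat) : R :=
  match n with
  | O => 0
  | S n' => lb_const (S t) n' + (mu / INR (S t) ^ 2 + lb_quad (S t) n') - lb_quart (S t) n'
  end.

Lemma mgf_from_ge : forall n x t, - INR t <= x <= INR t ->
  exp (lb_quad t n * x ^ 2 - lb_quart t n * x ^ 4 + lb_const t n) <= mgf_from mu x t n.
Proof.
  induction n as [|n IH]; intros x t Hx.
  - rewrite mgf_from_0. cbn [lb_quad lb_quart lb_const].
    replace (0 * x ^ 2 - 0 * x ^ 4 + 0) with 0 by ring. rewrite exp_0. lra.
  - rewrite mgf_from_S. cbn [lb_quad lb_quart lb_const].
    set (T := INR (S t)).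
    assert (HT : T = INR t + 1) by (unfold T; apply S_INR).
    assert (Ht0 : 0 <= INR t) by apply pos_INR.
    set (A := lb_quad (S t) n). set (D := lb_quart (S t) n). set (B := lb_const (S t) n).
    set (P := mu / T ^ 2 + A).
    set (u := P * (x + 1) ^ 2 - D * (x + 1) ^ 4 + B).
    set (v := P * (x + -1) ^ 2 - D * (x + -1) ^ 4 + B).
    assert (Hu : exp u <= exp (mu * ((x + 1) ^ 2 / T ^ 2)) * mgf_from mu (x + 1) (S t) n).
    { eapply Rle_trans; [| apply Rmult_le_compat_l; [left; apply exp_pos | apply IH]].
      - rewrite <- exp_plus. apply exp_le_exp, Req_le. unfold u, P, A, D, B. field. lra.
      - fold T. lra. }
    assert (Hv : exp v <= exp (mu * ((x + -1) ^ 2 / T ^ 2)) * mgf_from mu (x + -1) (S t) n).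
    { eapply Rle_trans; [| apply Rmult_le_compat_l; [left; apply exp_pos | apply IH]].
      - rewrite <- exp_plus. apply exp_le_exp, Req_le. unfold v, P, A, D, B. field. lra.
      - fold T. lra. }
    pose proof ga_bounds.
    assert (Hbias : -1 < ga * x / T < 1).
    { split; [apply Rlt_div_r | apply Rlt_div_l]; nra. }
    eapply Rle_trans; [| eapply Rle_trans; [apply (exp_tilted_le_mean_exp u v _ Hbias)|]].
    + apply exp_le_exp, Req_le. unfold u, v, P. field. lra.
    + lra.
Qed.

Lemma lb_quart_bound : forall n t, (1 <= t)%nat -> 0 <= lb_quart t n <= 1 / INR t ^ 3.
Proof.
  pose proof ga_bounds.
  induction n as [|n IH]; intros t Ht.
  - cbn [lb_quart]. split; [lra|]. apply Rdiv_le_0_compat; [lra|]. apply pow_lt, lt_0_INR; lia.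
  - cbn [lb_quart]. destruct (IH (S t) ltac:(lia)) as [Hl Hu].
    assert (HT : INR (S t) = INR t + 1) by apply S_INR.
    assert (Ht1 : 1 <= INR t) by (apply (le_INR 1); lia).
    set (T := INR (S t)) in *. set (y := INR t) in *. set (D := lb_quart (S t) n) in *.
    assert (0 < ga / T) by (apply Rdiv_lt_0_compat; lra).
    assert (0 <= ga ^ 4 / (3 * T ^ 4))
      by (apply Rdiv_le_0_compat; [nra | apply Rmult_lt_0_compat; [lra | apply pow_lt; lra]]).
    split; [nra|].
    assert (D * (1 + 4 * ga / T) <= 1 / T ^ 3 * (1 + 4 * ga / T)) by (apply Rmult_le_compat_r; lra).
    assert (E : 1 / y ^ 3 - (1 / T ^ 3 * (1 + 4 * ga / T) + ga ^ 4 / (3 * T ^ 4))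
       = (3 * (6 * y ^ 2 + 4 * y + 1) + y ^ 3 * (9 - 12 * ga - ga ^ 4)) / (3 * y ^ 3 * T ^ 4)).
    { rewrite HT. field. lra. }
    assert (0 <= ga ^ 2 <= 1 / 4) by nra.
    assert (ga ^ 4 <= 1 / 16) by (replace (ga ^ 4) with (ga ^ 2 * ga ^ 2) by ring; nra).
    assert (0 <= y ^ 3 * (9 - 12 * ga - ga ^ 4)) by (apply Rmult_le_pos; [apply pow_le|]; lra).
    assert (0 <= (3 * (6 * y ^ 2 + 4 * y + 1) + y ^ 3 * (9 - 12 * ga - ga ^ 4)) / (3 * y ^ 3 * T ^ 4)).
    { apply Rdiv_le_0_compat; [nra|].
      apply Rmult_lt_0_compat; [apply Rmult_lt_0_compat; [|apply pow_lt]|apply pow_lt]; lra. }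
    lra.
Qed.

Fixpoint tilt_prod (t n : nat) : R :=
  match n with
  | O => 1
  | S n' => (1 + 2 * ga / INR (S t)) * tilt_prod (S t) n'
  end.

Lemma tilt_prod_pos : forall n t, 0 < tilt_prod t n.
Proof.
  pose proof ga_bounds.
  induction n as [|n IH]; intros t; cbn [tilt_prod]; [lra|].
  apply Rmult_lt_0_compat; auto.
  enough (0 < 2 * ga / INR (S t)) by lra.
  apply Rdiv_lt_0_compat; [lra | apply lt_0_INR; lia].
Qed.

Lemma tilt_prod_le_ratio : forall n t, (1 <= t)%nat -> tilt_prod t n <= INR (t + n) / INR t.
Proof.
  pose proof ga_bounds.
  induction n as [|n IH]; intros t Ht; cbn [tilt_prod].
  - rewrite Nat.add_0_r. right. field. apply not_0_INR; lia.
  - specialize (IH (S t) ltac:(lia)). replace (S t + n)%nat with (t + S n)%nat in IH by lia.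
    assert (HT : INR (S t) = INR t + 1) by apply S_INR.
    assert (Ht1 : 1 <= INR t) by (apply (le_INR 1); lia).
    assert (H1 : 1 + 2 * ga / INR (S t) <= INR (S t) / INR t).
    { rewrite HT. replace ((INR t + 1) / INR t) with (1 + / INR t) by (field; lra).
      enough (2 * ga / (INR t + 1) <= / INR t) by lra.
      apply Rle_trans with (/ (INR t + 1)).
      - apply Rle_div_l; [lra|]. rewrite Rinv_l; lra.
      - apply Rinv_le_contravar; lra. }
    pose proof (tilt_prod_pos n (S t)).
    eapply Rle_trans; [apply Rmult_le_compat_r; [lra | exact H1]|].
    eapply Rle_trans; [apply Rmult_le_compat_l; [| exact IH]|].
    + apply Rdiv_le_0_compat; [apply pos_INR | apply lt_0_INR; lia].
    + right. field. split; [apply not_0_INR; lia | lra].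
Qed.

Lemma tilt_prod_le_exp : forall n t, (1 <= t)%nat ->
  tilt_prod t n <= exp (2 * ga * (ln (INR (t + n)) - ln (INR t))).
Proof.
  pose proof ga_bounds.
  induction n as [|n IH]; intros t Ht; cbn [tilt_prod].
  - rewrite Nat.add_0_r, Rminus_diag, Rmult_0_r, exp_0. lra.
  - specialize (IH (S t) ltac:(lia)). replace (S t + n)%nat with (t + S n)%nat in IH by lia.
    assert (HT : INR (S t) = INR t + 1) by apply S_INR.
    assert (Ht1 : 1 <= INR t) by (apply (le_INR 1); lia).
    assert (Hl : / INR (S t) <= ln (INR (S t)) - ln (INR t))
      by (rewrite HT; apply ln_succ_sub_ge_inv; lra).
    assert (H1 : 1 + 2 * ga / INR (S t) <= exp (2 * ga * (ln (INR (S t)) - ln (INR t)))).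
    { eapply Rle_trans; [| apply exp_le_exp]; [apply exp_ineq1_le|].
      apply Rmult_le_compat_l; lra. }
    pose proof (tilt_prod_pos n (S t)).
    eapply Rle_trans; [apply Rmult_le_compat_r; [lra | exact H1]|].
    eapply Rle_trans; [apply Rmult_le_compat_l; [left; apply exp_pos | exact IH]|].
    rewrite <- exp_plus. apply exp_le_exp. right. ring.
Qed.

(* Once [t >= t0], [lb_quad t n] is close to [a / t], where [a] is slightly below
   the optimal coefficient [(1-r)/4]; before [t0] it is merely bounded. *)
Variable eta : R.
Hypothesis Heta : 0 < eta <= (1 - r) / 8.
Variable t0 : nat.
Hypothesis Ht0 : (1 <= t0)%nat.
Hypothesis Ht0_large : 9 <= eta * r * INR t0.
Let a := (1 - r) / 4 - eta.

Lemma a_bounds : 0 <= a <= 1.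
Proof. unfold a; lra. Qed.

Lemma lb_quad_step t : (t0 <= t)%nat ->
  let T := INR (S t) in
  a / INR t <= (mu / T ^ 2 + a / T) * (1 + 2 * ga / T) - 1 / T ^ 3 * (6 + 4 * ga / T)
               - ga ^ 2 / (2 * T ^ 2).
Proof.
  intros Ht T.
  assert (HT : T = INR t + 1) by apply S_INR.
  assert (Ht0r : INR t0 <= INR t) by (apply le_INR; lia).
  assert (Ht1 : 1 <= INR t0) by (apply (le_INR 1); lia).
  set (y := INR t) in *.
  pose proof ga_bounds. pose proof mu_nonneg. pose proof a_bounds.
  assert (E : (mu / T ^ 2 + a / T) * (1 + 2 * ga / T) - 1 / T ^ 3 * (6 + 4 * ga / T)
              - ga ^ 2 / (2 * T ^ 2) - a / y
            = (eta * r + 2 * ga * mu / T - a / y - (6 + 4 * ga / T) / T) / T ^ 2).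
  { rewrite HT. unfold a, mu, ga. field. split; lra. }
  enough (0 <= (eta * r + 2 * ga * mu / T - a / y - (6 + 4 * ga / T) / T) / T ^ 2) by lra.
  apply Rdiv_le_0_compat; [| apply pow_lt; lra].
  assert (0 <= 2 * ga * mu / T) by (apply Rdiv_le_0_compat; [nra | lra]).
  assert (a / y <= 1 / y) by (apply Rmult_le_compat_r; [left; apply Rinv_0_lt_compat |]; lra).
  assert ((6 + 4 * ga / T) / T <= 8 / y).
  { assert (ga / T <= 1 / 2) by (apply Rle_div_l; lra).
    apply Rle_trans with (8 / T); [apply Rmult_le_compat_r; [left; apply Rinv_0_lt_compat |]; lra|].
    apply Rmult_le_compat_l; [lra | apply Rinv_le_contravar; lra]. }
  assert (9 / y <= eta * r).
  { apply Rle_div_l; [lra|]. assert (0 < eta * r) by (apply Rmult_lt_0_compat; lra). nra. }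
  assert (1 / y + 8 / y = 9 / y) by (field; lra).
  lra.
Qed.

Lemma lb_quad_ge : forall n t, (t0 <= t)%nat ->
  a / INR t - a / INR (t + n) * tilt_prod t n <= lb_quad t n.
Proof.
  induction n as [|n IH]; intros t Ht.
  - cbn [lb_quad tilt_prod]. rewrite Nat.add_0_r. right. field. apply not_0_INR; lia.
  - cbn [lb_quad tilt_prod]. specialize (IH (S t) ltac:(lia)).
    replace (S t + n)%nat with (t + S n)%nat in IH by lia.
    destruct (lb_quart_bound n (S t) ltac:(lia)) as [HD0 HD1].
    pose proof (lb_quad_step t Ht) as Key. cbv zeta in Key.
    assert (HT : 0 < INR (S t)) by (apply lt_0_INR; lia).
    set (T := INR (S t)) in *. set (N := INR (t + S n)) in *. set (p := tilt_prod (S t) n) in *.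
    pose proof ga_bounds.
    assert (Hc : 0 < 1 + 2 * ga / T) by (assert (0 < ga / T) by (apply Rdiv_lt_0_compat; lra); lra).
    assert ((mu / T ^ 2 + (a / T - a / N * p)) * (1 + 2 * ga / T)
            <= (mu / T ^ 2 + lb_quad (S t) n) * (1 + 2 * ga / T)) by (apply Rmult_le_compat_r; lra).
    assert (lb_quart (S t) n * (6 + 4 * ga / T) <= 1 / T ^ 3 * (6 + 4 * ga / T)).
    { apply Rmult_le_compat_r; auto. assert (0 < ga / T) by (apply Rdiv_lt_0_compat; lra). lra. }
    assert ((mu / T ^ 2 + (a / T - a / N * p)) * (1 + 2 * ga / T)
            = (mu / T ^ 2 + a / T) * (1 + 2 * ga / T) - a / N * ((1 + 2 * ga / T) * p)) by ring.
    lra.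
Qed.

Lemma lb_quad_nonneg : forall n t, (t0 <= t)%nat -> 0 <= lb_quad t n.
Proof.
  intros n t Ht. eapply Rle_trans; [| apply lb_quad_ge; auto].
  assert (Ht1 : 1 <= INR t) by (apply (le_INR 1); lia).
  pose proof (tilt_prod_le_ratio n t ltac:(lia)) as Hp. pose proof a_bounds.
  assert (Hn : 0 < INR (t + n)) by (apply lt_0_INR; lia).
  assert (Hle : a / INR (t + n) * tilt_prod t n <= a / INR (t + n) * (INR (t + n) / INR t)).
  { apply Rmult_le_compat_l; auto. apply Rdiv_le_0_compat; lra. }
  replace (a / INR (t + n) * (INR (t + n) / INR t)) with (a / INR t) in Hle by (field; lra).
  lra.
Qed.

Lemma lb_quad_ge_early : forall j t n, (1 <= t)%nat -> (t + j = t0)%nat ->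
  - (10 * 2 ^ j - 9) <= lb_quad t n.
Proof.
  pose proof ga_bounds. pose proof mu_nonneg.
  induction j as [|j IH]; intros t n Ht Htj.
  - simpl. pose proof (lb_quad_nonneg n t ltac:(lia)). lra.
  - assert (1 <= 2 ^ j) by (apply pow_R1_Rle; lra).
    destruct n as [|n]; [cbn [lb_quad]; simpl pow; lra|].
    cbn [lb_quad]. specialize (IH (S t) n ltac:(lia) ltac:(lia)).
    destruct (lb_quart_bound n (S t) ltac:(lia)) as [HD0 HD1].
    assert (HT : 1 <= INR (S t)) by (apply (le_INR 1); lia).
    set (T := INR (S t)) in *. set (A := lb_quad (S t) n) in *. set (D := lb_quart (S t) n) in *.
    assert (Hq : 0 <= ga / T <= 1 / 2) by (split; [apply Rdiv_le_0_compat | apply Rle_div_l]; lra).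
    assert (Hm2 : 0 <= mu / T ^ 2) by (apply Rdiv_le_0_compat; [lra | apply pow_lt; lra]).
    assert (1 / T ^ 3 <= 1) by (apply Rle_div_l; [apply pow_lt; lra|]; rewrite Rmult_1_l; apply pow_R1_Rle; lra).
    assert (D * (6 + 4 * ga / T) <= 8) by nra.
    assert (ga ^ 2 / (2 * T ^ 2) <= 1).
    { apply Rle_div_l; [apply Rmult_lt_0_compat; [|apply pow_lt]; lra|].
      assert (1 <= T ^ 2) by (apply pow_R1_Rle; lra). nra. }
    assert (- 2 * (10 * 2 ^ j - 9) <= (mu / T ^ 2 + A) * (1 + 2 * ga / T)).
    { destruct (Rle_dec 0 (mu / T ^ 2 + A)).
      - assert (0 <= (mu / T ^ 2 + A) * (1 + 2 * ga / T)) by (apply Rmult_le_pos; lra). lra.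
      - nra. }
    change (2 ^ S j) with (2 * 2 ^ j). lra.
Qed.

Variable eps : R.
Hypothesis Heps : 0 < eps < 1.
Let Y := exp (2 * ga * (ln (/ eps) / (1 - 2 * ga))).

Lemma tilt_defect_le : forall n t, (1 <= t)%nat ->
  a / INR (t + n) * tilt_prod t n <= eps / INR t + Y / INR (t + n).
Proof.
  intros n t Ht.
  assert (Ht1 : 1 <= INR t) by (apply (le_INR 1); lia).
  assert (Htn : INR t <= INR (t + n)) by (apply le_INR; lia).
  set (N := INR (t + n)) in *. set (y := INR t) in *.
  pose proof (tilt_prod_le_exp n t Ht) as Hp. fold N y in Hp.
  rewrite <- ln_div in Hp by lra.
  pose proof ga_bounds. pose proof a_bounds.
  assert (1 <= N / y) by (apply Rle_div_r; lra).
  pose proof (exp_mul_ln_le_split (2 * ga) (N / y) eps ltac:(lra) ltac:(lra) Heps) as Hy.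
  fold Y in Hy.
  assert (a / N * tilt_prod t n <= a / N * (eps * (N / y) + Y)).
  { apply Rmult_le_compat_l; [apply Rdiv_le_0_compat|]; lra. }
  replace (a / N * (eps * (N / y) + Y)) with (a * (eps / y) + a * (Y / N)) in H2 by (field; lra).
  assert (0 <= eps / y) by (apply Rdiv_le_0_compat; lra).
  assert (0 <= Y / N) by (apply Rdiv_le_0_compat; [left; apply exp_pos | lra]).
  nra.
Qed.

Lemma lb_const_ge : forall n t, (t0 <= t)%nat ->
  a * (ln (INR (t + n) + 1) - ln (INR t + 1)) - eps * (ln (INR (t + n)) - ln (INR t))
  - / INR t - Y * INR n / INR (t + n) <= lb_const t n.
Proof.
  pose proof mu_nonneg. pose proof a_bounds.
  induction n as [|n IH]; intros t Ht.
  - cbn [lb_const]. rewrite Nat.add_0_r, !Rminus_diag.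
    assert (0 < / INR t) by (apply Rinv_0_lt_compat, lt_0_INR; lia).
    replace (Y * INR 0 / INR t) with 0 by (simpl; field; apply not_0_INR; lia). lra.
  - cbn [lb_const]. specialize (IH (S t) ltac:(lia)).
    pose proof (lb_quad_ge n (S t) ltac:(lia)) as HA.
    pose proof (tilt_defect_le n (S t) ltac:(lia)) as HE.
    replace (S t + n)%nat with (t + S n)%nat in IH, HA, HE by lia.
    destruct (lb_quart_bound n (S t) ltac:(lia)) as [HD0 HD1].
    assert (HT : INR (S t) = INR t + 1) by apply S_INR.
    assert (Ht1 : 1 <= INR t) by (apply (le_INR 1); lia).
    assert (HSn : INR (S n) = INR n + 1) by apply S_INR.
    assert (INR (S t) <= INR (t + S n)) by (apply le_INR; lia).
    set (T := INR (S t)) in *. set (y := INR t) in *. set (N := INR (t + S n)) in *.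
    assert (0 <= mu / T ^ 2) by (apply Rdiv_le_0_compat; [lra | apply pow_lt; lra]).
    assert (ln (T + 1) - ln T <= / T) by (apply ln_succ_sub_le_inv; lra).
    assert (/ T <= ln T - ln y) by (rewrite HT; apply ln_succ_sub_ge_inv; lra).
    assert (/ T + 1 / T ^ 3 <= / y).
    { rewrite HT. assert (E : / y - (/ (y + 1) + 1 / (y + 1) ^ 3) = (y ^ 2 + y + 1) / (y * (y + 1) ^ 3))
        by (field; lra).
      assert (0 <= (y ^ 2 + y + 1) / (y * (y + 1) ^ 3)).
      { apply Rdiv_le_0_compat; [nra | apply Rmult_lt_0_compat; [| apply pow_lt]; lra]. }
      lra. }
    assert (a * (ln (T + 1) - ln T) <= a / T) by (apply Rmult_le_compat_l; lra).
    assert (eps / T <= eps * (ln T - ln y)) by (apply Rmult_le_compat_l; lra).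
    assert (Y * INR (S n) / N = Y * INR n / N + Y / N) by (rewrite HSn; field; lra).
    rewrite <- HT. lra.
Qed.

Lemma lb_const_ge_early : forall j t n, (t + j = t0)%nat ->
  lb_const t0 n - INR j * (10 * 2 ^ t0 + 2) <= lb_const t (j + n).
Proof.
  pose proof mu_nonneg.
  induction j as [|j IH]; intros t n Htj.
  - replace t with t0 by lia. rewrite Nat.add_0_l. simpl INR. lra.
  - rewrite Nat.add_succ_l. cbn [lb_const]. specialize (IH (S t) n ltac:(lia)).
    pose proof (lb_quad_ge_early j (S t) (j + n) ltac:(lia) ltac:(lia)).
    destruct (lb_quart_bound (j + n) (S t) ltac:(lia)) as [HD0 HD1].
    assert (HT : 1 <= INR (S t)) by (apply (le_INR 1); lia).
    assert (1 / INR (S t) ^ 3 <= 1)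
      by (apply Rle_div_l; [apply pow_lt; lra|]; rewrite Rmult_1_l; apply pow_R1_Rle; lra).
    assert (0 <= mu / INR (S t) ^ 2) by (apply Rdiv_le_0_compat; [lra | apply pow_lt; lra]).
    assert (2 ^ j <= 2 ^ t0) by (apply Rle_pow; [lra | lia]).
    rewrite S_INR. lra.
Qed.

Lemma mgf_Lsum_ge_explicit n : (t0 <= n)%nat ->
  exp ((a - eps) * ln (INR n) - (a * ln (INR t0 + 1) + 1 + Y + INR t0 * (10 * 2 ^ t0 + 2)))
  <= expect n (fun xs => exp (mu * Lsum xs)).
Proof.
  intro Hn. rewrite <- mgf_from_Lsum. eapply Rle_trans; [| apply mgf_from_ge; simpl; lra].
  apply exp_le_exp. replace (0 ^ 2) with 0 by ring. replace (0 ^ 4) with 0 by ring.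
  destruct (Nat.le_exists_sub t0 n Hn) as [m [-> _]].
  pose proof (lb_const_ge_early t0 0 m ltac:(lia)) as H1.
  pose proof (lb_const_ge m t0 (le_n _)) as H2.
  replace (m + t0)%nat with (t0 + m)%nat in * by lia.
  set (N := INR (t0 + m)) in *.
  assert (Ht1 : 1 <= INR t0) by (apply (le_INR 1); lia).
  assert (INR m <= N) by (apply le_INR; lia).
  assert (INR t0 <= N) by (apply le_INR; lia).
  assert (ln N <= ln (N + 1)) by (apply ln_le; lra).
  assert (0 <= ln (INR t0)) by (rewrite <- ln_1; apply ln_le; lra).
  assert (HY : 0 < Y) by apply exp_pos.
  assert (Y * INR m / N <= Y) by (apply Rle_div_l; nra).
  assert (/ INR t0 <= 1) by (rewrite <- Rinv_1; apply Rinv_le_contravar; lra).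
  pose proof a_bounds.
  assert (a * ln N <= a * ln (N + 1)) by (apply Rmult_le_compat_l; lra).
  assert (0 <= eps * ln (INR t0)) by (apply Rmult_le_pos; lra).
  lra.
Qed.

End MgfLower.

Lemma mgf_Lsum_ge r : 0 < r < 1 -> forall d, 0 < d -> exists C N, forall n, (N <= n)%nat ->
  exp (((1 - r) / 4 - d) * ln (INR n) - C) <= expect n (fun xs => exp ((1 - r ^ 2) / 8 * Lsum xs)).
Proof.
  intros Hr d Hd.
  set (eta := Rmin d ((1 - r) / 4) / 2).
  set (eps := Rmin d 1 / 2).
  assert (Heta : 0 < eta <= (1 - r) / 8).
  { unfold eta. pose proof (Rmin_r d ((1 - r) / 4)).
    assert (0 < Rmin d ((1 - r) / 4)) by (apply Rmin_pos; lra). lra. }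
  assert (Heps : 0 < eps < 1).
  { unfold eps. pose proof (Rmin_r d 1). assert (0 < Rmin d 1) by (apply Rmin_pos; lra). lra. }
  destruct (exists_nat_gt (9 / (eta * r))) as [k Hk].
  set (t0 := max 1 k).
  assert (Ht0 : (1 <= t0)%nat) by lia.
  assert (Ht0_large : 9 <= eta * r * INR t0).
  { assert (INR k <= INR t0) by (apply le_INR; lia).
    assert (0 < eta * r) by (apply Rmult_lt_0_compat; lra).
    apply Rlt_div_l in Hk; [|lra]. nra. }
  eexists. exists t0. intros n Hn.
  eapply Rle_trans; [| apply (mgf_Lsum_ge_explicit r Hr eta Heta t0 Ht0 Ht0_large eps Heps n Hn)].
  apply exp_le_exp, Rplus_le_compat_r.
  assert (0 <= ln (INR n)) by (rewrite <- ln_1; apply ln_le; [lra | apply (le_INR 1); lia]).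
  assert ((1 - r) / 4 - eta - eps >= (1 - r) / 4 - d).
  { unfold eta, eps. pose proof (Rmin_l d ((1 - r) / 4)). pose proof (Rmin_l d 1). lra. }
  nra.
Qed.

(** * Bounds on the probability *)

(* Chernoff: [r = 1/c] optimizes the exponent [(1-r)/4 - c (1-r^2)/8]. *)
Lemma chernoff_exponent c : 1 <= c -> (1 - / c) / 4 - c * ((1 - (/ c) ^ 2) / 8) = - Kc c.
Proof. intro. unfold Kc. field. lra. Qed.

Lemma chernoff_gap r r' c : c * r' = 1 ->
  (1 - r) / 4 - (1 - r') / 4 - c * ((1 - r ^ 2) / 8 - (1 - r' ^ 2) / 8) = c * (r' - r) ^ 2 / 8.
Proof.
  intro H. assert (c * r' ^ 2 = r') by (replace (c * r' ^ 2) with (c * r' * r') by ring; rewrite H; ring).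
  assert (c * r' * r = r) by (rewrite H; ring).
  lra.
Qed.

Lemma prob_L_le c : 1 <= c -> forall n, (1 <= n)%nat ->
  prob_L c n <= exp (- Kc c * ln (INR n) + 1).
Proof.
  intros Hc n Hn. rewrite prob_L_expect.
  set (r := / c).
  assert (Hr : 0 < r <= 1) by (split; [apply Rinv_0_lt_compat | rewrite <- Rinv_1; apply Rinv_le_contravar]; lra).
  set (lam := (1 - r ^ 2) / 8).
  assert (Hlam : 0 <= lam <= 1 / 8) by (unfold lam; nra).
  eapply Rle_trans; [apply expect_le; intro xs; apply (indic_le_exp _ _ lam); lra|].
  rewrite (expect_ext n _ (fun xs => exp (- (lam * (c * ln (INR n)))) * exp (lam * Lsum xs)))
    by (intro xs; rewrite <- exp_plus; f_equal; ring).
  rewrite expect_scal.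
  eapply Rle_trans; [apply Rmult_le_compat_l; [left; apply exp_pos | apply (mgf_Lsum_le r Hr n Hn)]|].
  rewrite <- exp_plus. apply exp_le_exp.
  pose proof (chernoff_exponent c Hc) as K. fold r lam in K.
  assert ((1 - r) / 4 + 2 * lam <= 1) by (unfold lam; nra).
  fold lam. replace (- (lam * (c * ln (INR n))) + ((1 - r) / 4 * ln (INR n) + (1 - r) / 4 + 2 * lam))
    with (((1 - r) / 4 - c * lam) * ln (INR n) + ((1 - r) / 4 + 2 * lam)) by ring.
  rewrite K. lra.
Qed.

Lemma exp_le_three_regimes lam lam1 lam2 a b x : 0 <= lam1 <= lam -> lam <= lam2 -> a <= b ->
  exp (lam * x) <= exp ((lam - lam1) * a) * exp (lam1 * x) + exp (lam * b) * indic a x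
                   + exp ((lam - lam2) * b) * exp (lam2 * x).
Proof.
  intros H1 H2 Hab.
  pose proof (exp_pos ((lam - lam1) * a)). pose proof (exp_pos (lam1 * x)).
  pose proof (exp_pos (lam * b)). pose proof (exp_pos ((lam - lam2) * b)).
  pose proof (exp_pos (lam2 * x)).
  assert (0 < exp ((lam - lam1) * a) * exp (lam1 * x)) by (apply Rmult_lt_0_compat; lra).
  assert (0 < exp ((lam - lam2) * b) * exp (lam2 * x)) by (apply Rmult_lt_0_compat; lra).
  unfold indic. destruct (Rle_dec a x) as [Hax|Hax].
  - destruct (Rle_dec x b) as [Hxb|Hxb].
    + assert (exp (lam * x) <= exp (lam * b)) by (apply exp_le_exp; nra). lra.
    + assert (exp (lam * x) <= exp ((lam - lam2) * b) * exp (lam2 * x)).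
      { rewrite <- exp_plus. apply exp_le_exp. nra. }
      nra.
  - assert (exp (lam * x) <= exp ((lam - lam1) * a) * exp (lam1 * x)).
    { rewrite <- exp_plus. apply exp_le_exp. nra. }
    nra.
Qed.

(* If the exponential moments at [lam1 < lam] and [lam2 > lam] are small enough,
   a fixed fraction of the moment at [lam] comes from [c T <= L <= c' T]. *)
Lemma prob_L_ge_of_mgf c c' n lam lam1 lam2 B :
  0 <= lam1 <= lam -> lam <= lam2 -> c <= c' -> 0 <= ln (INR n) ->
  B <= expect n (fun xs => exp (lam * Lsum xs)) ->
  exp ((lam - lam1) * (c * ln (INR n))) * expect n (fun xs => exp (lam1 * Lsum xs)) <= B / 4 ->
  exp ((lam - lam2) * (c' * ln (INR n))) * expect n (fun xs => exp (lam2 * Lsum xs)) <= B / 4 ->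
  exp (- (lam * (c' * ln (INR n)))) * (B / 2) <= prob_L c n.
Proof.
  intros Hl1 Hl2 Hc HT H0 H1 H2. rewrite prob_L_expect.
  set (T := ln (INR n)) in *.
  assert (Hsplit : expect n (fun xs => exp (lam * Lsum xs))
     <= exp ((lam - lam1) * (c * T)) * expect n (fun xs => exp (lam1 * Lsum xs))
      + exp (lam * (c' * T)) * expect n (fun xs => indic (c * T) (Lsum xs))
      + exp ((lam - lam2) * (c' * T)) * expect n (fun xs => exp (lam2 * Lsum xs))).
  { rewrite <- !expect_scal, <- !expect_plus. apply expect_le. intro xs.
    apply exp_le_three_regimes; nra. }
  set (P := expect n (fun xs => indic (c * T) (Lsum xs))) in *.
  assert (HP : B / 2 <= exp (lam * (c' * T)) * P) by lra.
  apply Rmult_le_compat_l with (r := exp (- (lam * (c' * T)))) in HP; [|left; apply exp_pos].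
  rewrite <- (Rmult_assoc (exp _) (exp _) P), <- exp_plus, Rplus_opp_l, exp_0, Rmult_1_l in HP.
  exact HP.
Qed.

Lemma eventually_le_mul_ln Q g : 0 < g -> exists N, forall n, (N <= n)%nat -> Q <= g * ln (INR n).
Proof.
  intro Hg. destruct (ln_INR_eventually_ge (Q / g)) as [N HN]. exists N. intros n Hn.
  specialize (HN n Hn). apply Rle_div_l in HN; [lra | auto].
Qed.

Lemma mgf_Lsum_shifted_le r c lam n : 0 < r <= 1 -> (1 <= n)%nat ->
  exp ((lam - (1 - r ^ 2) / 8) * (c * ln (INR n))) * expect n (fun xs => exp ((1 - r ^ 2) / 8 * Lsum xs))
  <= exp (((1 - r) / 4 + c * (lam - (1 - r ^ 2) / 8)) * ln (INR n) + 1).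
Proof.
  intros Hr Hn.
  eapply Rle_trans; [apply Rmult_le_compat_l; [left; apply exp_pos | apply (mgf_Lsum_le r Hr n Hn)]|].
  rewrite <- exp_plus. apply exp_le_exp. nra.
Qed.

Lemma exp_sub_ln x y : 0 < y -> exp (x - ln y) = exp x / y.
Proof. intro. unfold Rminus. rewrite exp_plus, exp_Ropp, exp_ln by lra. reflexivity. Qed.

(* Tilt at [r = 1/(c + rho)]; the moments at [r1 = 1/c] and [r2 = 1/(c + 2 rho)]
   control the contributions of [L < c ln n] and [L > (c + 2 rho) ln n]. *)
Section LowerTail.
Variables c rho : R.
Hypothesis Hc : 1 < c.
Hypothesis Hrho : 0 < rho.
Let c2 := c + 2 * rho.
Let r := / (c + rho).
Let r1 := / c.
Let r2 := / c2.
Let lam := (1 - r ^ 2) / 8.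
Let g1 := c * (r1 - r) ^ 2 / 8.
Let g2 := c2 * (r2 - r) ^ 2 / 8.

Lemma tilt_params :
  0 < r < 1 /\ 0 < r1 <= 1 /\ 0 < r2 <= 1 /\ r2 < r < r1 /\ c * r1 = 1 /\ c2 * r2 = 1 /\ 1 < c2 * r.
Proof.
  unfold r, r1, r2, c2.
  repeat split; try (apply Rinv_0_lt_compat; lra); try (apply Rinv_lt_contravar; nra);
    try (rewrite <- Rinv_1; first [apply Rinv_lt_contravar | apply Rinv_le_contravar]; lra).
  - field. lra.
  - field. lra.
  - apply Rlt_div_r; lra.
Qed.

Lemma tilt_gaps_pos : 0 < g1 /\ 0 < g2.
Proof.
  destruct tilt_params as (_ & _ & _ & [Hr2r Hrr1] & _).
  unfold g1, g2, c2. split; apply Rdiv_lt_0_compat; try apply Rmult_lt_0_compat; nra.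
Qed.

Lemma tilt_exponent_ge : - Kc c - rho / 4 <= (1 - r) / 4 - lam * c2.
Proof.
  destruct tilt_params as (Hr & _ & _ & [_ Hrr1] & Hcr1 & _ & Hc2r).
  rewrite <- (chernoff_exponent c ltac:(lra)). fold r1.
  assert (c2 * r ^ 2 >= r) by (replace (c2 * r ^ 2) with (c2 * r * r) by ring; nra).
  assert (c * r1 ^ 2 = r1) by (replace (c * r1 ^ 2) with (c * r1 * r1) by ring; rewrite Hcr1; ring).
  unfold lam. unfold c2 in *. nra.
Qed.

Lemma prob_L_ge_tilted : exists N, forall n, (N <= n)%nat ->
  exp ((- Kc c - 4 * rho) * ln (INR n)) <= prob_L c n.
Proof.
  destruct tilt_params as (Hr & Hr1 & Hr2 & [Hr2r Hrr1] & Hcr1 & Hc2r2 & Hc2r).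
  destruct tilt_gaps_pos as [Hg1 Hg2]. pose proof tilt_exponent_ge as HK.
  pose proof (chernoff_gap r r1 c Hcr1) as G1. pose proof (chernoff_gap r r2 c2 Hc2r2) as G2.
  set (d' := Rmin (Rmin g1 g2) rho / 2).
  assert (Hd' : 0 < d' /\ d' <= g1 / 2 /\ d' <= g2 / 2 /\ d' <= rho / 2).
  { unfold d'. pose proof (Rmin_l (Rmin g1 g2) rho). pose proof (Rmin_r (Rmin g1 g2) rho).
    pose proof (Rmin_l g1 g2). pose proof (Rmin_r g1 g2).
    pose proof (Rmin_pos (Rmin g1 g2) rho (Rmin_pos g1 g2 Hg1 Hg2)). lra. }
  destruct (mgf_Lsum_ge r Hr d' ltac:(lra)) as [C0 [N0 HL]].
  set (Q := 1 + Rabs C0 + ln 4).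
  assert (HQ : 0 < Q /\ C0 + ln 4 + 1 <= Q /\ C0 + ln 2 <= Q).
  { pose proof (Rle_abs C0). pose proof (Rabs_pos C0).
    assert (0 < ln 4) by (rewrite <- ln_1; apply ln_increasing; lra).
    assert (ln 2 < ln 4) by (apply ln_increasing; lra). unfold Q. lra. }
  destruct (eventually_le_mul_ln Q (g1 / 2) ltac:(lra)) as [N1 HN1].
  destruct (eventually_le_mul_ln Q (g2 / 2) ltac:(lra)) as [N2 HN2].
  destruct (eventually_le_mul_ln Q (2 * rho) ltac:(lra)) as [N3 HN3].
  exists (max 1 (max N0 (max N1 (max N2 N3)))). intros n Hn.
  specialize (HN1 n ltac:(lia)). specialize (HN2 n ltac:(lia)). specialize (HN3 n ltac:(lia)).
  specialize (HL n ltac:(lia)). set (T := ln (INR n)) in *.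
  assert (HT : 0 <= T) by (apply Rmult_le_reg_l with (2 * rho); lra).
  set (B := exp (((1 - r) / 4 - d') * T - C0)).
  assert (HB : forall g, d' <= g / 2 -> Q <= g / 2 * T -> exp (((1 - r) / 4 - g) * T + 1) <= B / 4).
  { intros g Hg HQg. unfold B. rewrite <- exp_sub_ln by lra. apply exp_le_exp. nra. }
  eapply Rle_trans; [| apply (prob_L_ge_of_mgf c c2 n lam ((1 - r1 ^ 2) / 8) ((1 - r2 ^ 2) / 8) B)].
  - unfold B. rewrite <- exp_sub_ln, <- exp_plus by lra. apply exp_le_exp. fold T.
    assert ((- Kc c - rho / 4) * T <= ((1 - r) / 4 - lam * c2) * T) by (apply Rmult_le_compat_r; lra).
    assert (d' * T <= rho / 2 * T) by (apply Rmult_le_compat_r; lra).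
    lra.
  - unfold lam. nra.
  - unfold lam. nra.
  - unfold c2. lra.
  - exact HT.
  - exact HL.
  - eapply Rle_trans; [apply (mgf_Lsum_shifted_le r1 c lam n Hr1 ltac:(lia))|].
    replace ((1 - r1) / 4 + c * (lam - (1 - r1 ^ 2) / 8)) with ((1 - r) / 4 - g1) by (unfold g1, lam; lra).
    apply HB; lra.
  - eapply Rle_trans; [apply (mgf_Lsum_shifted_le r2 c2 lam n Hr2 ltac:(lia))|].
    replace ((1 - r2) / 4 + c2 * (lam - (1 - r2 ^ 2) / 8)) with ((1 - r) / 4 - g2) by (unfold g2, lam; lra).
    apply HB; lra.
Qed.

End LowerTail.

Lemma prob_L_ge_gt1 c : 1 < c -> forall d, 0 < d -> exists N, forall n, (N <= n)%nat ->
  exp ((- Kc c - d) * ln (INR n)) <= prob_L c n.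
Proof.
  intros Hc d Hd. destruct (prob_L_ge_tilted c (d / 4) Hc ltac:(lra)) as [N HN].
  exists N. intros n Hn. replace d with (4 * (d / 4)) by field. auto.
Qed.

Lemma prob_L_antitone c c' n : c <= c' -> 0 <= ln (INR n) -> prob_L c' n <= prob_L c n.
Proof.
  intros H Hn. rewrite !prob_L_expect. apply expect_le. intro xs. unfold indic.
  assert (c * ln (INR n) <= c' * ln (INR n)) by (apply Rmult_le_compat_r; lra).
  destruct (Rle_dec (c' * ln (INR n)) (Lsum xs)), (Rle_dec (c * ln (INR n)) (Lsum xs)); lra.
Qed.

Lemma prob_L_ge c : 1 <= c -> forall d, 0 < d -> exists N, forall n, (N <= n)%nat ->
  exp ((- Kc c - d) * ln (INR n)) <= prob_L c n.
Proof.
  intros Hc d Hd. destruct (Rle_lt_or_eq_dec 1 c Hc) as [Hc1 | <-]; [apply prob_L_ge_gt1; auto|].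
  (* At [c = 1], compare with [c = 1 + rho], whose exponent [Kc (1 + rho)] is small. *)
  set (rho := Rmin d 1 / 2).
  assert (Hrho : 0 < rho <= 1 / 2 /\ rho <= d / 2)
    by (unfold rho; pose proof (Rmin_l d 1); pose proof (Rmin_r d 1); pose proof (Rmin_pos d 1); lra).
  destruct (prob_L_ge_gt1 (1 + rho) ltac:(lra) (d / 2) ltac:(lra)) as [N1 HN1].
  destruct (ln_INR_eventually_ge 0) as [N2 HN2].
  exists (max N1 N2). intros n Hn. specialize (HN2 n ltac:(lia)).
  eapply Rle_trans; [| apply (prob_L_antitone 1 (1 + rho)); lra].
  eapply Rle_trans; [| apply HN1; lia].
  apply exp_le_exp, Rmult_le_compat_r; auto.
  assert (Kc 1 = 0) by (unfold Kc; field).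
  assert (Kc (1 + rho) <= rho ^ 2 / 8).
  { unfold Kc. replace ((1 - (1 + rho)) ^ 2) with (rho ^ 2) by ring.
    apply Rmult_le_compat_l; [nra | apply Rinv_le_contravar; lra]. }
  nra.
Qed.

Lemma prob_L_bounds c : 1 <= c -> forall d, 0 < d -> exists N, forall n, (N <= n)%nat ->
  exp ((- Kc c - d) * ln (INR n)) <= prob_L c n <= exp ((- Kc c + d) * ln (INR n)).
Proof.
  intros Hc d Hd.
  destruct (prob_L_ge c Hc d Hd) as [N1 HN1].
  destruct (eventually_le_mul_ln 1 d Hd) as [N2 HN2].
  exists (max 1 (max N1 N2)). intros n Hn. split; [apply HN1; lia|].
  eapply Rle_trans; [apply prob_L_le; auto; lia|].
  apply exp_le_exp. specialize (HN2 n ltac:(lia)). lra.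
Qed.

Lemma Rpower_form_of_bounds (p : nat -> R) K :
  (forall d, 0 < d -> exists N, forall n, (N <= n)%nat ->
     exp ((K - d) * ln (INR n)) <= p n <= exp ((K + d) * ln (INR n))) ->
  exists eps : nat -> R, Un_cv eps 0 /\
    exists N, forall n, (N <= n)%nat -> p n = Rpower (INR n) (K + eps n).
Proof.
  intro Hp.
  assert (Hlog : forall d, 0 < d -> exists N, forall n, (N <= n)%nat ->
            0 < p n /\ 1 <= ln (INR n) /\ Rabs (ln (p n) / ln (INR n) - K) <= d).
  { intros d Hd. destruct (Hp d Hd) as [N1 HN1]. destruct (ln_INR_eventually_ge 1) as [N2 HN2].
    exists (max N1 N2). intros n Hn.
    destruct (HN1 n ltac:(lia)) as [Hl Hu]. specialize (HN2 n ltac:(lia)).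
    set (T := ln (INR n)) in *.
    assert (Hpos : 0 < p n) by (eapply Rlt_le_trans; [apply exp_pos | exact Hl]).
    apply ln_le in Hl; [| apply exp_pos]. apply ln_le in Hu; [| exact Hpos].
    rewrite ln_exp in Hl, Hu.
    assert (K - d <= ln (p n) / T) by (apply Rle_div_r; lra).
    assert (ln (p n) / T <= K + d) by (apply Rle_div_l; lra).
    repeat split; [lra | lra |]. apply Rabs_le. lra. }
  exists (fun n => ln (p n) / ln (INR n) - K). split.
  - intros e He. destruct (Hlog (e / 2) ltac:(lra)) as [N HN]. exists N. intros n Hn.
    unfold R_dist. rewrite Rminus_0_r. destruct (HN n Hn) as (_ & _ & H). lra.
  - destruct (Hlog 1 ltac:(lra)) as [N HN]. exists N. intros n Hn.
    destruct (HN n Hn) as (Hpos & HT & _).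
    unfold Rpower. replace ((K + (ln (p n) / ln (INR n) - K)) * ln (INR n)) with (ln (p n)) by (field; lra).
    rewrite exp_ln; auto.
Qed.

Theorem mainTheorem2 (c : R) (hc : 1 <= c) :
  exists eps : nat -> R,
    Un_cv eps 0 /\
    exists N : nat, forall n : nat, (N <= n)%nat ->
      prob_L c n = Rpower (INR n) (- Kc c + eps n).
Proof.
  apply Rpower_form_of_bounds. intros d Hd. unfold Rminus.
  apply (prob_L_bounds c hc d Hd).
Qed.
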